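(* Let $N, N_y, M \in \mathbb{N}$, $X \in \mathbb{R}^{N \times M}$, $Y \in \mathbb{R}^{N_y \times M}$, $\lambda \ge 0$, and $\Omega = \{1,\dots,N\}$. For $S\subset\Omega$ with $X_SX_S^\top + \lambda I_{|S|} \succ 0$ let $J(S) = \operatorname{tr}\{ Y X_S^\top (X_S X_S^\top + \lambda I_{|S|})^{-1} X_S Y^\top \}$, with $J(\emptyset)=0$. Then for any $S \subset \Omega$ and $i \in \Omega\setminus S$ such that $P^{xx}_{S\cup\{i\},S\cup\{i\}} \succ 0$, \[ J(S\cup\{i\}) - J(S) = \frac{\| (Q^{xy}_i(S))^\top \|^2}{Q^{xx}_{i,i}(S)}. \]
   Context: Notation: for a matrix $A$ and an ordered index set $S=\{S_1,\dots,S_k\}$, $A_S$ is the matrix whose $j$th row is row $S_j$ of $A$; $A_{S,S}$ is the $k\times k$ matrix with $(j,l)$ entry $A_{S_j,S_l}$; $A_i$ is row $i$ of $A$, $A_{i,i}$ its $(i,i)$ entry; $\|\cdot\|$ is the Euclidean norm. Define $P^{xx} = XX^\top + \lambda I_N$ (so $P^{xx}_{S,S} = X_SX_S^\top+\lambda I_{|S|}$), $P^{xy} = XY^\top$. Define $Q^{xx}(\emptyset)=P^{xx}$, $Q^{xy}(\emptyset)=P^{xy}$, and for $|S|\ge1$ with $P^{xx}_{S,S}\succ0$: $Q^{xx}(S) = P^{xx} - (P^{xx}_S)^\top (P^{xx}_{S,S})^{-1} P^{xx}_S$, $Q^{xy}(S) = P^{xy} - (P^{xx}_S)^\top (P^{xx}_{S,S})^{-1}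 P^{xy}_S$. *)

From HB Require Import structures.
From mathcomp Require Import all_boot all_order all_algebra.
Set Implicit Arguments. Unset Strict Implicit. Unset Printing Implicit Defensive.
Import Order.TTheory GRing.Theory Num.Theory.
Local Open Scope ring_scope.

Definition posdef (R : realFieldType) (n : nat) (A : 'M[R]_n) : Prop :=
  A^T = A /\ forall v : 'cV[R]_n, v != 0 -> 0 < (v^T *m A *m v) 0 0.

(* A_S : rows of A indexed by S, in the increasing order of enum S. *)
Definition rows_of (R : Type) (N m : nat) (S : {set 'I_N}) (A : 'M[R]_(N, m))
  : 'M[R]_(#|S|, m) := rowsub (fun j : 'I_#|S| => enum_val j) A.

Definition subsq (R : Type) (N : nat) (S : {set 'I_N}) (A : 'M[R]_N)
  : 'M[R]_#|S| := mxsub (fun j : 'I_#|S| => enum_val j)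
                        (fun j : 'I_#|S| => enum_val j) A.

Section Defs.
Variables (R : realFieldType) (N Ny M : nat).
Variables (X : 'M[R]_(N, M)) (Y : 'M[R]_(Ny, M)) (lambda : R).

Definition Pxx : 'M[R]_N := X *m X^T + lambda%:M.
Definition Pxy : 'M[R]_(N, Ny) := X *m Y^T.

(* J(S) = tr( Y X_S^T (X_S X_S^T + lambda I)^{-1} X_S Y^T );
   for S = set0 all matrices are empty and J(set0) = 0. *)
Definition J (S : {set 'I_N}) : R :=
  \tr (Y *m (rows_of S X)^T
         *m invmx (rows_of S X *m (rows_of S X)^T + lambda%:M)
         *m rows_of S X *m Y^T).

(* Q^{xx}(S), Q^{xy}(S); for S = set0 they reduce to Pxx, Pxy. *)
Definition Qxx (S : {set 'I_N}) : 'M[R]_N :=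
  Pxx - (rows_of S Pxx)^T *m invmx (subsq S Pxx) *m rows_of S Pxx.
Definition Qxy (S : {set 'I_N}) : 'M[R]_(N, Ny) :=
  Pxy - (rows_of S Pxx)^T *m invmx (subsq S Pxx) *m rows_of S Pxy.
End Defs.

From HB Require Import structures.
From mathcomp Require Import all_boot all_order all_algebra.
Set Implicit Arguments. Unset Strict Implicit. Unset Printing Implicit Defensive.
Import Order.TTheory GRing.Theory Num.Theory.
Local Open Scope ring_scope.

(* Write P = P^{xx}, B = P^{xy}, E_S for the 0/1 matrix selecting the rows in S,
   and F(S) = E_S^T (E_S P E_S^T)^-1 E_S, so that J(S) = tr (B^T F(S) B),
   Q^{xx}(S) = P - P F(S) P and Q^{xy}(S) = B - P F(S) B.  F(S) is the unique Z
   with E_S^T E_S Z = Z and E_S P Z = E_S.  Checking these two equations for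
   F(S) + s^-1 u u^T, where u = e_i - F(S) P e_i and s = Q^{xx}_{ii}(S), gives the
   rank-one update F(S + i) = F(S) + s^-1 u u^T; and u^T B is row i of Q^{xy}(S). *)

Section Selection.
Variables (R : nzRingType) (N : nat).
Implicit Types (S T : {set 'I_N}) (i a b : 'I_N).

Definition selmx S : 'M[R]_(#|S|, N) := rowsub enum_val 1%:M.

Lemma rows_ofE m S (A : 'M[R]_(N, m)) : rows_of S A = selmx S *m A.
Proof. exact: rowsubE. Qed.

Lemma subsqE S (A : 'M[R]_N) : subsq S A = selmx S *m A *m (selmx S)^T.
Proof.
rewrite /subsq -[A in LHS]mulmx1 mxsub_mul -rows_ofE; congr (_ *m _).
by apply/matrixP => a j; rewrite !mxE eq_sym.
Qed.

Lemma selmx_mul_tr S : selmx S *m (selmx S)^T = 1%:M.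
Proof.
rewrite mul_rowsub_mx mul1mx; apply/matrixP => j k.
by rewrite !mxE (inj_eq enum_val_inj) eq_sym.
Qed.

Lemma tr_selmx_mulE S a b :
  ((selmx S)^T *m selmx S) a b = ((a == b) && (a \in S))%:R.
Proof.
rewrite mxE; under eq_bigr do rewrite !mxE.
rewrite -(big_enum_val (fun x => (x == a)%:R * (x == b)%:R)) /=.
rewrite big_mkcond (bigD1 a) //= big1 => [|x /negPf xa]; last first.
  by rewrite xa mul0r if_same.
by rewrite addr0 eqxx mul1r eq_sym; case: (a \in S); rewrite ?andbT ?andbF.
Qed.

Lemma delta_mul_tr_selmx S i :
  i \notin S -> (delta_mx 0 i : 'rV[R]_N) *m (selmx S)^T = 0.
Proof.
move=> iS; apply/matrixP => k j; rewrite -rowE !mxE.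
by case: eqP iS => // <-; rewrite enum_valP.
Qed.

Lemma tr_selmx_mul_setU1 S i : i \notin S ->
  (selmx (i |: S))^T *m selmx (i |: S)
  = (selmx S)^T *m selmx S + (delta_mx 0 i : 'rV[R]_N)^T *m delta_mx 0 i.
Proof.
move=> iS; apply/matrixP => a b.
rewrite [LHS]tr_selmx_mulE [in RHS]mxE tr_selmx_mulE trmx_delta mul_delta_mx.
rewrite !mxE in_setU1.
case: (eqVneq a b) => [<-|nab] /=.
  rewrite andbb; case: (eqVneq a i) => [->|_] /=; last by rewrite addr0.
  by rewrite (negPf iS) add0r.
rewrite add0r; case: (eqVneq b i) => [bi|]; last by rewrite andbF.
by move: nab; rewrite bi => /negPf ->.
Qed.

Lemma selmx_mul_tr_selmx S T : S \subset T ->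
  selmx S *m (selmx T)^T *m selmx T = selmx S.
Proof.
move=> sST; apply/matrixP => j b.
rewrite -mulmxA mul_rowsub_mx mul1mx mxE tr_selmx_mulE !mxE.
by rewrite (subsetP sST _ (enum_valP j)) andbT.
Qed.
End Selection.

Section RestrictedInverse.
Variables (R : comUnitRingType) (N k : nat) (E : 'M[R]_(k, N)) (A : 'M[R]_N).

Definition restr_inv : 'M[R]_N := E^T *m invmx (E *m A *m E^T) *m E.

Lemma tr_restr_inv : A^T = A -> restr_inv^T = restr_inv.
Proof.
by move=> symA; rewrite /restr_inv !trmx_mul trmxK trmx_inv !trmx_mul trmxK symA !mulmxA.
Qed.

Hypothesis unitK : E *m A *m E^T \in unitmx.

Lemma mul_restr_inv : E *m A *m restr_inv = E.
Proof. by rewrite /restr_inv !mulmxA mulmxV // mul1mx. Qed.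

Lemma restr_inv_uniq (Z : 'M[R]_N) :
  E^T *m E *m Z = Z -> E *m A *m Z = E -> restr_inv = Z.
Proof.
move=> EZ EAZ; rewrite -[RHS]EZ -mulmxA -(mulKmx unitK (E *m Z)) -!mulmxA.
by rewrite (mulmxA E^T E Z) EZ (mulmxA E A Z) EAZ !mulmxA.
Qed.
End RestrictedInverse.

Lemma mxtrace_rank_one (R : comNzRingType) m n (u : 'cV[R]_m) (B : 'M[R]_(m, n)) :
  \tr (B^T *m (u *m u^T) *m B) = \sum_j ((u^T *m B) 0 j) ^+ 2.
Proof.
rewrite mulmxA -[u in B^T *m u]trmxK -trmx_mul -mulmxA mxtrace_mulC trace_mx11 mxE.
by apply: eq_bigr => j _; rewrite [_^T _ _]mxE expr2.
Qed.

Section RankOneUpdate.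
Variables (R : fieldType) (N k k' : nat) (A : 'M[R]_N).
Variables (E : 'M[R]_(k, N)) (E' : 'M[R]_(k', N)) (e : 'rV[R]_N).
Hypotheses (symA : A^T = A) (EEt : E *m E^T = 1%:M) (eet : e *m e^T = 1%:M).
Hypotheses (eEt : e *m E^T = 0) (E'E't : E' *m E'^T = 1%:M).
Hypothesis E'tE' : E'^T *m E' = E^T *m E + e^T *m e.
Hypotheses (unitK : E *m A *m E^T \in unitmx) (unitK' : E' *m A *m E'^T \in unitmx).

Local Notation F := (restr_inv E A).
Local Notation u := (e^T - F *m A *m e^T).
Local Notation s := ((e *m (A - A *m F *m A) *m e^T) 0 0).

Let E'tE'_F : E'^T *m E' *m F = F.
Proof.
rewrite E'tE' mulmxDl /restr_inv !mulmxA -(mulmxA E^T) EEt mulmx1.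
by rewrite -(mulmxA e^T) eEt mulmx0 !mul0mx addr0.
Qed.

Let E'tE'_u : E'^T *m E' *m u = u.
Proof.
have Eet : E *m e^T = 0 by rewrite -[E]trmxK -trmx_mul eEt trmx0.
rewrite mulmxBr (mulmxA _ (F *m A)) (mulmxA _ F) E'tE'_F.
by rewrite E'tE' mulmxDl -!mulmxA Eet eet mulmx0 mulmx1 add0r.
Qed.

Let EAu : E *m A *m u = 0.
Proof. by rewrite mulmxBr (mulmxA _ (F *m A)) (mulmxA _ F) mul_restr_inv // subrr. Qed.

Let tr_u : u^T = e - e *m A *m F.
Proof.
by rewrite linearB /= trmx_mul trmxK trmx_mul symA tr_restr_inv // mulmxA.
Qed.

Let eAu : e *m A *m u = s%:M.
Proof. by rewrite -mx11_scalar !mulmxBr mulmxBl !mulmxA. Qed.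

Let e_u : e *m u = 1%:M.
Proof. by rewrite mulmxBr eet /restr_inv !mulmxA eEt !mul0mx subr0. Qed.

Let E'_split p (W : 'M[R]_(N, p)) :
  E' *m W = E' *m E^T *m (E *m W) + E' *m e^T *m (e *m W).
Proof.
by rewrite -[E' in LHS]mul1mx -E'E't -(mulmxA E') E'tE' mulmxDr mulmxDl !mulmxA.
Qed.

Lemma schur_neq0 : s != 0.
Proof.
apply/eqP => s0.
have E'Au : E' *m A *m u = 0.
  rewrite -mulmxA E'_split (mulmxA E) EAu (mulmxA e) eAu s0.
  by rewrite mul_mx_scalar scale0r !mulmx0 add0r.
have E'u : E' *m u = 0.
  rewrite -(mulKmx unitK' (E' *m u)) (mulmxA _ E') -!(mulmxA (E' *m A)) E'tE'_u.
  by rewrite E'Au mulmx0.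
have := e_u; rewrite -E'tE'_u -mulmxA E'u !mulmx0 => /matrixP/(_ 0 0).
by rewrite !mxE => /eqP; rewrite eq_sym oner_eq0.
Qed.

Lemma restr_inv_update : restr_inv E' A = F + s^-1 *: (u *m u^T).
Proof.
have EAZ : E *m A *m (F + s^-1 *: (u *m u^T)) = E.
  rewrite mulmxDr mul_restr_inv // -scalemxAr (mulmxA (E *m A) u) EAu.
  by rewrite mul0mx scaler0 addr0.
have eAZ : e *m A *m (F + s^-1 *: (u *m u^T)) = e.
  rewrite mulmxDr -scalemxAr (mulmxA (e *m A) u) eAu mul_scalar_mx scalerA.
  by rewrite mulVf ?schur_neq0 // scale1r tr_u addrC subrK.
apply: restr_inv_uniq => //.
  by rewrite mulmxDr E'tE'_F -scalemxAr (mulmxA _ u) E'tE'_u.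
rewrite -mulmxA E'_split (mulmxA E) EAZ (mulmxA e) eAZ.
by rewrite -!mulmxA -mulmxDr -E'tE' mulmxA E'E't mul1mx.
Qed.

Lemma restr_inv_update_trace n (B : 'M[R]_(N, n)) :
  \tr (B^T *m restr_inv E' A *m B) - \tr (B^T *m F *m B)
  = (\sum_j ((e *m (B - A *m F *m B)) 0 j) ^+ 2) / s.
Proof.
rewrite restr_inv_update mulmxDr mulmxDl mxtraceD addrAC subrr add0r.
rewrite -scalemxAr -scalemxAl mxtraceZ mxtrace_rank_one mulrC tr_u.
by rewrite mulmxBl [e *m (B - _)]mulmxBr (mulmxA e (A *m F)) (mulmxA e A).
Qed.
End RankOneUpdate.

Section PositiveDefinite.
Variable R : realFieldType.

Lemma posdef_unitmx n (K : 'M[R]_n) : posdef K -> K \in unitmx.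
Proof.
case=> _ pdK; rewrite unitmxE unitfE; apply/negP => /det0P [v v0 vK].
have vT0 : v^T != 0 by rewrite -(inj_eq (@trmx_inj _ _ _)) trmxK trmx0.
by have := pdK _ vT0; rewrite trmxK vK mul0mx mxE ltxx.
Qed.

Lemma posdef_congr n m (K : 'M[R]_n) (H : 'M[R]_(m, n)) :
  posdef K -> H *m H^T = 1%:M -> posdef (H *m K *m H^T).
Proof.
case=> symK pdK HHt; split; first by rewrite !trmx_mul trmxK symK mulmxA.
move=> v v0; have := pdK (H^T *m v); rewrite trmx_mul trmxK !mulmxA; apply.
by apply: contra v0 => /eqP Hv0; rewrite -[v]mul1mx -HHt -mulmxA Hv0 mulmx0.
Qed.

Lemma posdef_subsq_subset N (A : 'M[R]_N) (S T : {set 'I_N}) :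
  S \subset T -> posdef (subsq T A) -> posdef (subsq S A).
Proof.
move=> sST pdT; have HT := selmx_mul_tr_selmx R sST.
have -> : subsq S A = selmx R S *m (selmx R T)^T *m subsq T A
                        *m (selmx R S *m (selmx R T)^T)^T.
  by rewrite !subsqE -[selmx R S in LHS]HT [(_ *m selmx R T)^T]trmx_mul !mulmxA.
apply: posdef_congr => //.
by rewrite trmx_mul trmxK mulmxA HT selmx_mul_tr.
Qed.
End PositiveDefinite.

Section RidgeQuantities.
Variables (R : realFieldType) (N Ny M : nat).
Variables (X : 'M[R]_(N, M)) (Y : 'M[R]_(Ny, M)) (lambda : R).
Local Notation A := (Pxx X lambda).
Local Notation B := (Pxy X Y).

Lemma tr_Pxx : A^T = A.
Proof. by rewrite /Pxx linearD /= trmx_mul trmxK tr_scalar_mx. Qed.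

Lemma J_restr_inv S : J X Y lambda S = \tr (B^T *m restr_inv (selmx R S) A *m B).
Proof.
rewrite /J /restr_inv /Pxy rows_ofE.
have -> : selmx R S *m X *m (selmx R S *m X)^T + lambda%:M
          = selmx R S *m A *m (selmx R S)^T.
  rewrite /Pxx mulmxDr mulmxDl mul_mx_scalar -scalemxAl selmx_mul_tr.
  by rewrite trmx_mul !mulmxA scalemx1.
by rewrite !trmx_mul trmxK !mulmxA.
Qed.

Lemma Qxx_restr_inv S : Qxx X lambda S = A - A *m restr_inv (selmx R S) A *m A.
Proof. by rewrite /Qxx subsqE rows_ofE trmx_mul tr_Pxx /restr_inv !mulmxA. Qed.

Lemma Qxy_restr_inv S : Qxy X Y lambda S = B - A *m restr_inv (selmx R S) A *m B.
Proof. by rewrite /Qxy subsqE !rows_ofE trmx_mul tr_Pxx /restr_inv !mulmxA. Qed.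
End RidgeQuantities.

Theorem theorem1 (R : realFieldType) (N Ny M : nat)
  (X : 'M[R]_(N, M)) (Y : 'M[R]_(Ny, M)) (lambda : R) (hl : 0 <= lambda)
  (S : {set 'I_N}) (i : 'I_N) (hi : i \notin S)
  (hpd : posdef (subsq (i |: S) (Pxx X lambda))) :
  J X Y lambda (i |: S) - J X Y lambda S =
    (\sum_(j < Ny) (Qxy X Y lambda S i j) ^+ 2) / (Qxx X lambda S i i).
Proof.
have unitK := posdef_unitmx (posdef_subsq_subset (subsetUr [set i] S) hpd).
have unitK' := posdef_unitmx hpd.
rewrite subsqE in unitK; rewrite subsqE in unitK'.
have eet : delta_mx 0 i *m (delta_mx 0 i)^T = 1%:M :> 'M[R]_1.
  by rewrite trmx_delta mul_delta_mx [delta_mx _ _]mx11_scalar mxE.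
rewrite !J_restr_inv Qxx_restr_inv Qxy_restr_inv.
rewrite (restr_inv_update_trace (tr_Pxx X lambda) (selmx_mul_tr _ _) eet
  (delta_mul_tr_selmx _ hi) (selmx_mul_tr _ _) (tr_selmx_mul_setU1 _ hi) unitK unitK').
congr (_ / _); last by rewrite trmx_delta -rowE -colE !mxE.
by apply: eq_bigr => j _; rewrite -rowE mxE.
Qed.
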